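(* Let $I\subseteq\mathbb{R}$ be an interval, $p\in\mathbb{N}$, $\mathbf{d}=(d_1,\dots,d_p)\in\mathbb{N}^p$, $\alpha\in\mathbb{N}_p^{\mathbf{d}}$, and let $\mathbf{M}=(M_1,\dots,M_p)$ be a $\mathbf{d}$-averaging mapping on $I$. Assume that the root graph $\mathcal{R}(G_\alpha)$ is ergodic and each $M_i$ is continuous and strict. Let $K_\alpha\colon I^p\to I$ be the mean such that $\mathbf{M}_\alpha^n\to\mathbf{K}_\alpha:=(K_\alpha,\dots,K_\alpha)$ pointwise on $I^p$ as $n\to\infty$ (which exists under these hypotheses). Then: (a) $\mathbf{K}_\alpha=\mathbf{K}_\alpha\circ\mathbf{M}_\alpha$; (b) if $M_1,\dots,M_p$ are nondecreasing in each variable, then so is $K_\alpha$; (c) if $I=(0,+\infty)$ and $M_1,\dots,M_p$ are positively homogeneous, then every iterate $\mathbf{M}_\alpha^n$ and $K_\alpha$ are positively homogeneous.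
   Context: A $k$-variable mean on an interval $I$ is a function $M\colon I^k\to I$ with $\min(x)\le M(x)\le\max(x)$ for all $x\in I^k$; it is strict if both inequalities are strict for every nonconstant $x$. Notation: $\mathbb{N}_p=\{1,\dots,p\}$, $\mathbb{N}_p^{\mathbf{d}}=\mathbb{N}_p^{d_1}\times\dots\times\mathbb{N}_p^{d_p}$. A $\mathbf{d}$-averaging mapping on $I$ is a sequence $(M_1,\dots,M_p)$ where each $M_i$ is a $d_i$-variable mean on $I$. For $\alpha=(\alpha_1,\dots,\alpha_p)\in\mathbb{N}_p^{\mathbf{d}}$, $\alpha_i=(\alpha_{i,1},\dots,\alpha_{i,d_i})$, define $\mathbf{M}_\alpha\colon I^p\to I^p$ by $\mathbf{M}_\alpha(x)=\big(M_i(x_{\alpha_{i,1}},\dots,x_{\alpha_{i,d_i}})\big)_{i=1}^p$; $\mathbf{M}_\alpha^n$ is its $n$-th iterate. The $\alpha$-incidence graph is $G_\alpha=(\mathbb{N}_p,E_\alpha)$, $E_\alpha=\{(\alpha_{i,j},i): i\in\mathbb{N}_p, j\in\mathbb{N}_{d_i}\}$. A digraph is ergodic if it is nonempty, irreducible (walks exist between any two vertices) and aperiodic (no integer $k>1$ divides the length of every cycle). The root $R(G)$ of a digraph $G$ is the union of the strongly connected components that receive no edge from another component; the root graph $\mathcal{R}(G)$ is the subgraph induced by $R(G)$. Positive homogeneity of $F$ on $(0,\infty)^k$ means $F(tx)=tF(x)$ for all $t>0$. *)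

From HB Require Import structures.
From mathcomp Require Import all_boot all_order all_algebra.
From mathcomp Require Import all_classical all_reals all_analysis.
Set Implicit Arguments. Unset Strict Implicit. Unset Printing Implicit Defensive.
Import Order.TTheory GRing.Theory Num.Theory.
Import numFieldNormedType.Exports.
Local Open Scope classical_set_scope.
Local Open Scope ring_scope.

Section Defs.
Variable R : realType.

Definition cube (I : set R) (k : nat) : set 'rV[R]_k :=
  [set x | forall j : 'I_k, I (x ord0 j)].
Arguments cube : clear implicits.

(* min / max of the coordinates (only used for k > 0) *)
Definition vmin k (x : 'rV[R]_k) : R :=
  let s := [seq x ord0 j | j <- enum 'I_k] in \big[Num.min/head 0 s]_(y <- s) y.
Definition vmax k (x : 'rV[R]_k) : R :=
  let s := [seq x ord0 j | j <- enum 'I_k] in \big[Num.max/head 0 s]_(y <- s) y.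

Definition is_mean (I : set R) k (M : 'rV[R]_k -> R) :=
  forall x, cube I k x -> vmin x <= M x <= vmax x.

Definition nonconstant k (x : 'rV[R]_k) := exists j j' : 'I_k, x ord0 j != x ord0 j'.

Definition strict_mean (I : set R) k (M : 'rV[R]_k -> R) :=
  forall x, cube I k x -> nonconstant x -> vmin x < M x < vmax x.

Definition Malpha p (d : 'I_p -> nat) (alpha : forall i : 'I_p, 'I_(d i) -> 'I_p)
  (M : forall i : 'I_p, 'rV[R]_(d i) -> R) (x : 'rV[R]_p) : 'rV[R]_p :=
  \row_(i < p) M i (\row_(j < d i) x ord0 (alpha i j)).

Definition nondecr_each (I : set R) k (F : 'rV[R]_k -> R) :=
  forall x (j : 'I_k) (t : R), cube I k x -> I t -> x ord0 j <= t ->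
    F x <= F (\row_(l < k) if l == j then t else x ord0 l).

Definition pos_homogeneous k m (F : 'rV[R]_k -> 'rV[R]_m) :=
  forall (t : R) x, 0 < t -> cube [set y | 0 < y] k x -> F (t *: x) = t *: F x.
Definition pos_homogeneous1 k (F : 'rV[R]_k -> R) :=
  forall (t : R) x, 0 < t -> cube [set y | 0 < y] k x -> F (t *: x) = t * F x.

End Defs.
Arguments cube {R} I k.

Section Graph.
Variable p : nat.

Definition inc_edge (d : 'I_p -> nat) (alpha : forall i : 'I_p, 'I_(d i) -> 'I_p)
  : rel 'I_p := fun u v => [exists j : 'I_(d v), alpha v j == u].

Variable e : rel 'I_p.

Definition scc (v : 'I_p) : pred 'I_p := fun u => connect e v u && connect e u v.

(* root: union of SCCs receiving no edge from another component *)
Definition in_root (v : 'I_p) : bool :=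
  [forall u, forall w, (u \in scc v) && e w u ==> (w \in scc v)].

Definition root_edge : rel 'I_p := fun u v => [&& in_root u, in_root v & e u v].

Fixpoint walkn (f : rel 'I_p) (n : nat) (u v : 'I_p) : bool :=
  if n is n'.+1 then [exists w, f u w && walkn f n' w v] else u == v.

Definition ergodic (V : pred 'I_p) (f : rel 'I_p) :=
  [/\ exists v, V v,
      (forall u v, V u -> V v -> exists n, walkn f n u v) &
      (forall k : nat, (1 < k)%N ->
         ~ (forall n, (0 < n)%N -> (exists u, V u && walkn f n u u) -> (k %| n)%N))].

Definition root_ergodic := ergodic in_root root_edge.

End Graph.

From HB Require Import structures.
From mathcomp Require Import all_boot all_order all_algebra.
From mathcomp Require Import all_classical all_reals all_analysis.
Import Order.TTheory GRing.Theory Num.Theory.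
Import numFieldNormedType.Exports.
Set Implicit Arguments. Unset Strict Implicit. Unset Printing Implicit Defensive.
Local Open Scope classical_set_scope.
Local Open Scope ring_scope.

(* Each of the three properties holds for every iterate of M_alpha and survives
   the pointwise limit: K_alpha o M_alpha is the limit of the shifted sequence
   of iterates, and monotonicity and positive homogeneity are stable under
   composition and under pointwise limits of real sequences. *)

Section RowMeans.
Variable R : realType.

Lemma big_seq_in (I : set R) (op : R -> R -> R) (s : seq R) :
  (forall a b, I a -> I b -> I (op a b)) ->
  s != [::] -> (forall y, y \in s -> I y) -> I (\big[op/head 0 s]_(y <- s) y).
Proof.
move=> opI + sI; rewrite big_seq_cond; case: s sI => [|a s] // sI _.
by apply: big_ind => [|//|y /andP[/sI]//]; apply: sI; rewrite mem_head.
Qed.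

Lemma min_in (I : set R) a b : I a -> I b -> I (Num.min a b).
Proof. by rewrite minElt; case: ifP. Qed.

Lemma max_in (I : set R) a b : I a -> I b -> I (Num.max a b).
Proof. by rewrite maxElt; case: ifP. Qed.

Lemma row_coords_neq0 k (x : 'rV[R]_k) :
  (0 < k)%N -> [seq x ord0 j | j <- enum 'I_k] != [::].
Proof. by move=> k0; rewrite -size_eq0 size_map size_enum_ord -lt0n. Qed.

Lemma vmin_in (I : set R) k (x : 'rV[R]_k) :
  (0 < k)%N -> cube I k x -> I (vmin x).
Proof.
move=> k0 xI; apply: big_seq_in; [exact: min_in | exact: row_coords_neq0 |].
by move=> _ /mapP[j _ ->]; exact: xI.
Qed.

Lemma vmax_in (I : set R) k (x : 'rV[R]_k) :
  (0 < k)%N -> cube I k x -> I (vmax x).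
Proof.
move=> k0 xI; apply: big_seq_in; [exact: max_in | exact: row_coords_neq0 |].
by move=> _ /mapP[j _ ->]; exact: xI.
Qed.

Lemma mean_in (I : set R) k (F : 'rV[R]_k -> R) x :
  is_interval I -> (0 < k)%N -> is_mean I F -> cube I k x -> I (F x).
Proof.
move=> Iitv k0 Fmean xI.
apply: (Iitv (vmin x) (vmax x)); [exact: vmin_in | exact: vmax_in | exact: Fmean].
Qed.

Lemma nondecr_each_le (I : set R) k (F : 'rV[R]_k -> R) u v :
  nondecr_each I F -> cube I k u -> cube I k v ->
  (forall j, u ord0 j <= v ord0 j) -> F u <= F v.
Proof.
move=> Fmono uI vI uv.
pose w n := \row_(l < k) if (l < n)%N then v ord0 l else u ord0 l.
have wI n : cube I k (w n) by move=> l; rewrite mxE; case: ifP.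
have u_w n : F u <= F (w n).
  elim: n => [|n IH].
    by rewrite (_ : w 0%N = u) //; apply/rowP => l; rewrite mxE.
  apply: le_trans IH _; case: (ltnP n k) => [nk|kn].
    have -> : w n.+1 =
        \row_(l < k) if l == Ordinal nk then v ord0 (Ordinal nk) else w n ord0 l.
      apply/rowP => l; rewrite !mxE ltnS leq_eqVlt.
      have [->|ne] := eqVneq l (Ordinal nk); first by rewrite /= !eqxx.
      suff -> : (l == n :> nat) = false by [].
      by apply: contraNF ne => /eqP ln; apply/eqP/val_inj.
    by apply: Fmono => //; rewrite mxE ltnn; exact: uv.
  rewrite (_ : w n.+1 = w n) //; apply/rowP => l; rewrite !mxE.
  by rewrite !(leq_trans (ltn_ord l)) // ltnW.
by rewrite (_ : v = w k) //; apply/rowP => l; rewrite mxE ltn_ord.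
Qed.

End RowMeans.

Section AveragingIterates.
Variables (R : realType) (p : nat) (d : 'I_p -> nat).
Variables (alpha : forall i : 'I_p, 'I_(d i) -> 'I_p)
  (M : forall i : 'I_p, 'rV[R]_(d i) -> R).
Arguments alpha : clear implicits.
Arguments M : clear implicits.

Let Ma := Malpha alpha M.

Lemma Malpha_cube (I : set R) (x : 'rV[R]_p) :
  is_interval I -> (forall i, (0 < d i)%N) -> (forall i, is_mean I (M i)) ->
  cube I p x -> cube I p (Ma x).
Proof.
move=> Iitv d0 Mmean xI i; rewrite mxE.
by apply: mean_in (d0 i) (Mmean i) _ => // j; rewrite mxE.
Qed.

Lemma Malpha_le (I : set R) (x y : 'rV[R]_p) :
  (forall i, nondecr_each I (M i)) -> cube I p x -> cube I p y ->
  (forall j, x ord0 j <= y ord0 j) -> forall j, Ma x ord0 j <= Ma y ord0 j.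
Proof.
move=> Mmono xI yI xy i; rewrite !mxE.
by apply: (nondecr_each_le (Mmono i)) => j; rewrite ?mxE.
Qed.

Lemma Malpha_pos_homogeneous :
  (forall i, pos_homogeneous1 (M i)) -> pos_homogeneous Ma.
Proof.
move=> Mhom t x t0 xpos; apply/rowP => i; rewrite !mxE.
rewrite -Mhom //; last by move=> j; rewrite mxE.
by congr (M i _); apply/rowP => j; rewrite !mxE.
Qed.

End AveragingIterates.

Lemma iter_cube (R : realType) (I : set R) k (F : 'rV[R]_k -> 'rV[R]_k) x n :
  (forall y, cube I k y -> cube I k (F y)) -> cube I k x -> cube I k (iter n F x).
Proof. by move=> FI xI; elim: n => //= n; exact: FI. Qed.

Lemma iter_pos_homogeneous (R : realType) k (F : 'rV[R]_k -> 'rV[R]_k) n :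
  pos_homogeneous F ->
  (forall y, cube [set t | 0 < t] k y -> cube [set t | 0 < t] k (F y)) ->
  pos_homogeneous (iter n F).
Proof.
move=> Fhom Fpos; elim: n => [|n IH] t x t0 xpos //=.
by rewrite IH // Fhom //; exact: iter_cube.
Qed.

Lemma iter_limit_invariant (R : realType) (X : Type) (A : set X) (T : X -> X)
  (f : X -> R) (K : X -> R) :
  (forall x, A x -> A (T x)) ->
  (forall x, A x -> (fun n => f (iter n T x)) @ \oo --> K x) ->
  forall x, A x -> K (T x) = K x.
Proof.
move=> TA TK x xA.
have shiftK : (fun n => f (iter n.+1 T x)) @ \oo --> K x.
  by rewrite (cvg_shiftS (fun n => f (iter n T x))); exact: TK.
have shiftE : (fun n => f (iter n T (T x))) = (fun n => f (iter n.+1 T x)).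
  by apply/funext => n; rewrite iterSr.
have := TK _ (TA _ xA); rewrite shiftE => TxK.
exact: cvg_unique TxK shiftK.
Qed.

Section IterationLimit.
Variables (R : realType) (I : set R) (p : nat) (d : 'I_p -> nat).
Variables (alpha : forall i : 'I_p, 'I_(d i) -> 'I_p)
  (M : forall i : 'I_p, 'rV[R]_(d i) -> R) (K : 'rV[R]_p -> R) (i0 : 'I_p).
Arguments alpha : clear implicits.
Arguments M : clear implicits.
Hypotheses (Iitv : is_interval I) (d0 : forall i, (0 < d i)%N)
  (Mmean : forall i, is_mean I (M i)).
Hypothesis MK : forall x, cube I p x ->
  (fun n => iter n (Malpha alpha M) x ord0 i0) @ \oo --> K x.

Let Ma := Malpha alpha M.

Lemma Malpha_limit_invariant x : cube I p x -> K (Ma x) = K x.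
Proof.
apply: (iter_limit_invariant (f := fun y : 'rV[R]_p => y ord0 i0) _ MK).
by move=> y; exact: Malpha_cube.
Qed.

Lemma Malpha_limit_nondecr_each :
  (forall i, nondecr_each I (M i)) -> nondecr_each I K.
Proof.
move=> Mmono x j t xI tI xt; set y := \row_(l < p) _.
have yI : cube I p y by move=> l; rewrite mxE; case: ifP.
apply: ler_cvg_to (MK xI) (MK yI) _; apply: nearW => n.
suff iter_le : forall l, iter n Ma x ord0 l <= iter n Ma y ord0 l by exact: iter_le.
elim: n => [|n IH] /=; first by move=> l; rewrite mxE; case: eqP => [->|].
apply: Malpha_le Mmono _ _ IH; by apply: iter_cube => // z; exact: Malpha_cube.
Qed.

Lemma Malpha_limit_pos_homogeneous :
  I = [set t | 0 < t] -> (forall i, pos_homogeneous1 (M i)) ->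
  (forall n, pos_homogeneous (iter n Ma)) /\ pos_homogeneous1 K.
Proof.
move=> EI Mhom; subst I.
have iter_hom n : pos_homogeneous (iter n Ma).
  apply: iter_pos_homogeneous (Malpha_pos_homogeneous alpha Mhom) _ => y.
  exact: Malpha_cube.
split=> // t x t0 xpos.
have txpos : cube [set t | 0 < t] p (t *: x).
  by move=> l; rewrite mxE; apply: mulr_gt0 => //; exact: xpos.
have scaleE :
    (fun n => iter n Ma (t *: x) ord0 i0) = (fun n => t * iter n Ma x ord0 i0).
  by apply/funext => n; rewrite iter_hom // mxE.
have := MK txpos; rewrite scaleE => txK.
exact: cvg_unique txK (cvgMl_tmp (MK xpos)).
Qed.

End IterationLimit.

Theorem corollary3p2 (R : realType) (I : set R) (p : nat)
  (d : 'I_p -> nat) (alpha : forall i : 'I_p, 'I_(d i) -> 'I_p)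
  (M : forall i : 'I_p, 'rV[R]_(d i) -> R) (K : 'rV[R]_p -> R) :
  is_interval I ->
  (0 < p)%N ->
  (forall i, (0 < d i)%N) ->
  (forall i, is_mean I (M i)) ->
  root_ergodic (inc_edge alpha) ->
  (forall i, {within cube I (d i), continuous (M i)}) ->
  (forall i, strict_mean I (M i)) ->
  (forall x, cube I p x -> forall i : 'I_p,
     (fun n => (iter n (Malpha alpha M) x) ord0 i) @ \oo --> K x) ->
  [/\ (forall x, cube I p x -> K (Malpha alpha M x) = K x),
      ((forall i, nondecr_each I (M i)) -> nondecr_each I K) &
      (I = [set t | 0 < t] -> (forall i, pos_homogeneous1 (M i)) ->
        (forall n, pos_homogeneous (iter n (Malpha alpha M))) /\ pos_homogeneous1 K)].
Proof.
(* Ergodicity, continuity and strictness only guarantee that the limit K exists;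
   here its existence is assumed. *)
move=> Iitv p0 d0 Mmean _ _ _ MK.
have MK0 x (xI : cube I p x) := MK x xI (Ordinal p0).
split.
- exact: Malpha_limit_invariant MK0.
- exact: Malpha_limit_nondecr_each MK0.
- exact: Malpha_limit_pos_homogeneous MK0.
Qed.
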